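(* Let $C$ be a maximal cap in $AG(4,3)$ with anchor point $a$. Then $C$ is the union of $10$ $a$-lines, and every point $p \in AG(4,3)\setminus (C\cup\{a\})$ completes exactly three lines with pairs of points of $C$.
   Context: $AG(4,3)$ is the affine space $\mathbb{F}_3^4$; a line is a set of three distinct points $\{x,y,z\}$ with $x+y+z=0$. A cap is a set of points containing no line; a maximal cap is a cap of largest possible size (in $AG(4,3)$ this size is $20$). Every maximal cap $C$ in $AG(4,3)$ has a unique anchor point $a\notin C$ such that $C$ is a union of pairs $\{b,c\}$ with $\{a,b,c\}$ a line. For a point $a$, an $a$-line is a pair of points $\{b,c\}$ such that $\{a,b,c\}$ is a line. For a set $S$ and a point $p\notin S$, $p$ completes a line with a pair of points of $S$ if there are distinct $x,y\in S$ with $\{p,x,y\}$ a line; the number of lines $p$ completes with $S$ is the number of such unordered pairs $\{x,y\}$. *)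

From HB Require Import structures.
From mathcomp Require Import all_boot all_order all_algebra all_fingroup.
Set Implicit Arguments. Unset Strict Implicit. Unset Printing Implicit Defensive.
Import GRing.Theory.
Local Open Scope ring_scope.

Definition point := 'rV['F_3]_4.

Definition is_line (x y z : point) : bool :=
  [&& x != y, y != z, x != z & x + y + z == 0].

Definition cap (C : {set point}) : bool :=
  [forall x in C, forall y in C, forall z in C, ~~ is_line x y z].

Definition maximal_cap (C : {set point}) : Prop :=
  cap C /\ forall D : {set point}, cap D -> (#|D| <= #|C|)%N.

Definition aline (a : point) (L : {set point}) : bool :=
  [exists b, exists c, (L == [set b; c]) && is_line a b c].

Definition alines_in (a : point) (C : {set point}) : {set {set point}} :=
  [set L | aline a L && (L \subset C)].

Definition anchor (a : point) (C : {set point}) : Prop :=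
  a \notin C /\ C = \bigcup_(L in alines_in a C) L.

Definition completed_pairs (p : point) (S : {set point}) : {set {set point}} :=
  [set P | [exists x in S, exists y in S,
              [&& x != y, P == [set x; y] & is_line p x y]]].

From mathcomp Require Import all_boot all_order all_algebra all_fingroup.
Import GRing.Theory.

(* Since C is a union of a-lines, it consists of the points a + s and a - s for s in a set S
   of points of PG(3,3) (nonzero vectors up to sign), and no three points of S are collinear
   because C is a cap.  The cone over the elliptic quadric x0 x1 + x2^2 + x3^2 is a 20-cap,
   so S has at least 10 points.  An exhaustive search shows that a cap of PG(3,3) with at
   least 10 points is an ovoid: it has exactly 10 points and every point r off it lies on
   exactly 3 secants.  Hence the a-lines of C are the 10 pairs {a + s, a - s}, and for
   p = a + r or p = a - r outside C, the pairs {x, -(p + x)} in C correspond to the 6 ordered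
   secant pairs through r, which make up 3 lines. *)

Lemma sum_nat_count (s : seq nat) (b : pred nat) : (\sum_(i <- s) b i)%N = count b s.
Proof. by rewrite -sumn_count sumnE big_map. Qed.

Lemma card_set_uniq (T : finType) (s : seq T) : uniq s -> #|[set x in s]| = size s.
Proof. by move=> s_uniq; rewrite cardsE; apply/card_uniqP. Qed.

Lemma card_involution_pairs {T : finType} {X : {set T}} {f : T -> T} :
  {in X, forall x, f x \in X} -> {in X, involutive f} -> {in X, forall x, f x != x} ->
  (#|[set [set x; f x] | x in X]| * 2)%N = #|X|.
Proof.
move=> fX fK f_neq; rewrite -[#|X|]sum1_card (partition_big_imset (fun x => [set x; f x])).
rewrite -sum_nat_const; apply: eq_bigr => _ /imsetP[x xX ->].
have fiberE : [set y in X | [set y; f y] == [set x; f x]] = [set x; f x].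
  apply/setP => y; rewrite !inE; apply/idP/idP => [/andP[_ /eqP gy]|/orP[]/eqP->].
  - by rewrite -in_set2 -gy in_set2 eqxx.
  - by rewrite xX eqxx.
  by rewrite fX // fK // setUC eqxx.
by rewrite sum1dep_card fiberE cards2 eq_sym f_neq.
Qed.

Fixpoint words n : seq (seq nat) :=
  if n is n'.+1 then [seq x :: w | x <- iota 0 3, w <- words n'] else [:: [::]].

Lemma mem_words n w : (w \in words n) = (size w == n) && all (fun x => x < 3) w.
Proof.
elim: n w => [|n IHn] [|x w] //; first by apply/allpairsP => -[[y v] [_ _]].
apply/allpairsP/andP => [[[y v] [y3 vn [-> ->]]]|[wn /andP[x3 w3]]].
  move: y3 vn; rewrite -/(words n) mem_iota IHn => /andP[_ y3] /andP[vn v3].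
  by rewrite /= eqSS vn y3.
exists (x, w); rewrite -/(words n) mem_iota IHn; split=> //.
by apply/andP; split; [exact: wn | exact: w3].
Qed.

(* Vectors of F_3^4 are handled computationally as coordinate words over {0, 1, 2}.  The 40
   words whose first nonzero coordinate is 1 represent the points of PG(3,3); row i, column j
   of [line_table] holds the indices of the classes of r_i + r_j and r_i - r_j, the two other
   points of the projective line through the points i and j. *)
Definition wadd (d e : seq nat) : seq nat := mkseq (fun k => (nth 0 d k + nth 0 e k) %% 3) 4.
Definition wopp d := wadd d d.
Definition normalized (d : seq nat) := head 0 [seq x <- d | x != 0] == 1.
Definition normalize d := if normalized d then d else wopp d.

Definition proj_points := [seq d <- words 4 | normalized d].
Definition proj_index d := index (normalize d) proj_points.
Definition line_table := [seq [seq [:: proj_index (wadd r c); proj_index (wadd r (wopp c))]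
                                 | c <- proj_points] | r <- proj_points].

Lemma wadd_words d e : wadd d e \in words 4.
Proof. by rewrite mem_words size_mkseq eqxx; apply/allP => x /mapP[k _ ->]; rewrite ltn_mod. Qed.

Lemma proj_points_words : {subset proj_points <= words 4}.
Proof. by move=> d; rewrite mem_filter => /andP[]. Qed.

Lemma size_proj_points : size proj_points = 40. Proof. by []. Qed.
Lemma uniq_proj_points : uniq proj_points. Proof. by []. Qed.
Lemma wopp_proj_points : all (fun d => wopp d \notin proj_points) proj_points. Proof. by []. Qed.
Lemma normalize_proj_points :
  all (fun d => (normalize d \in proj_points) || (d == nseq 4 0)) (words 4).
Proof. by []. Qed.

Section CapSearch.

Variable T : seq (seq (seq nat)).

Definition third_points i j : seq nat := nth [::] (nth [::] T i) j.

Definition proj_cap (S : pred nat) :=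
  forall i j, i != j -> S i -> S j -> ~~ has S (third_points i j).

(* The sum counts the ordered pairs of points of S collinear with r, i.e. twice the number of
   secants through r. *)
Definition ovoid_counts (S : pred nat) :=
  count S (iota 0 40) = 10 /\
  forall r, r < 40 -> ~~ S r ->
    \sum_(c <- iota 0 40 | S c) count S (third_points r c) = 6.

Definition blocked x ch := flatten [seq third_points x z | z <- ch & z != x].

Definition leaf_ok ch :=
  [&& uniq ch, size ch == 10 &
      all (fun r => (r \in ch) || (sumn [seq count (mem ch) (third_points r c) | c <- ch] == 6))
          (iota 0 40)].

(* Backtracking over the candidates in order, [ch] being the points chosen so far: a branch is
   cut when it cannot reach 10 points, and after choosing x the candidates on a line through x
   and an earlier point are dropped. *)
Fixpoint cap_search n ch cand : bool :=
  if size ch + size cand < 10 then true else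
  match n, cand with
  | n'.+1, x :: cand' =>
      cap_search n' (x :: ch) (let b := blocked x ch in [seq y <- cand' | y \notin b])
      && cap_search n' ch cand'
  | _, _ => leaf_ok ch
  end.

Variable S : pred nat.
Hypothesis S_lt40 : forall i, S i -> i < 40.
Hypothesis S_cap : proj_cap S.
Hypothesis S_ge10 : 10 <= count S (iota 0 40).

Lemma leaf_okP ch :
  leaf_ok ch -> {subset ch <= S} -> {subset filter S (iota 0 40) <= ch} -> ovoid_counts S.
Proof.
case/and3P=> uniq_ch /eqP size_ch all_ch chS Sch.
have chE : ch =i filter S (iota 0 40).
  move=> x; apply/idP/idP=> [/chS Sx|/Sch //].
  by rewrite mem_filter mem_iota S_lt40 ?andbT.
have memS x : (x \in ch) = S x.
  by rewrite chE mem_filter andb_idr // mem_iota => /S_lt40.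
have perm_ch : perm_eq ch (filter S (iota 0 40)).
  by apply: uniq_perm; rewrite ?filter_uniq ?iota_uniq.
split; first by rewrite -size_filter -(perm_size perm_ch).
move=> r r40 Sr; have := allP all_ch r; rewrite mem_iota r40 memS (negbTE Sr).
move=> /(_ isT) /eqP sum6; rewrite -[RHS]sum6 -big_filter (perm_big ch).
  by rewrite sumnE big_map; apply: eq_bigr => c _; apply: eq_count => x; rewrite /= memS.
by rewrite perm_sym.
Qed.

Lemma cap_searchP n ch cand :
  size cand <= n -> cap_search n ch cand -> {subset ch <= S} ->
  {subset filter S (iota 0 40) <= ch ++ cand} -> ovoid_counts S.
Proof.
elim: n ch cand => [|n IHn] ch cand size_cand + chS Scover.
all: have count_le : count S (iota 0 40) <= size ch + size cand
       by rewrite -size_filter -size_cat uniq_leq_size ?filter_uniq ?iota_uniq.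
all: rewrite /= ltnNge (leq_trans S_ge10 count_le) /=; clear count_le.
  by case: cand size_cand Scover => // _; rewrite cats0 => Scover /leaf_okP; apply.
case: cand size_cand Scover => [_|x cand]; first by rewrite cats0 => Scover /leaf_okP; apply.
rewrite ltnS => size_cand Scover /andP[search_x search_nx].
have [Sx|nSx] := boolP (S x); last first.
  apply: IHn search_nx chS _ => // y Sy; have := Scover y Sy.
  rewrite !mem_cat inE => /or3P[-> // | /eqP yx | ->]; last by rewrite orbT.
  by move: Sy nSx; rewrite mem_filter yx => /andP[->].
apply: IHn search_x _ _ => [|y|y Sy].
- by rewrite size_filter (leq_trans (count_size _ _)).
- by rewrite inE => /orP[/eqP->|/chS].
have := Scover y Sy; rewrite !mem_cat !inE => /or3P[-> | -> // | y_cand].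
  by rewrite orbT.
rewrite mem_filter y_cand andbT /=; apply/orP; right; apply/negP.
move: Sy; rewrite mem_filter => /andP[Sy _].
case/flattenP=> s /mapP[z]; rewrite mem_filter => /andP[zx zch] -> y_third.
rewrite eq_sym in zx.
by case/hasP: (S_cap _ _ zx Sx (chS z zch)); exists y.
Qed.

End CapSearch.

Lemma cap_search_line_table : cap_search line_table 40 [::] (iota 0 40).
Proof. vm_cast_no_check (erefl true). Qed.

Lemma ovoid_line_table (S : pred nat) :
  (forall i, S i -> i < 40) -> proj_cap line_table S -> 10 <= count S (iota 0 40) ->
  ovoid_counts line_table S.
Proof.
move=> S40 capS countS.
have nil_sub : {subset [::] <= S} by [].
have iota_sub : {subset filter S (iota 0 40) <= [::] ++ iota 0 40}.
  by move=> i; rewrite mem_filter => /andP[].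
exact: (cap_searchP _ _ S40 capS countS 40 [::] (iota 0 40) (eq_leq (size_iota 0 40))
          cap_search_line_table nil_sub iota_sub).
Qed.

Local Open Scope ring_scope.

Lemma addrrr_point (x : point) : x + x + x = 0.
Proof. by rewrite -mulr2n -mulrSr -scaler_nat (pchar_Fp_0 (isT : prime 3)) scale0r. Qed.

Lemma opp_addrr_point (x : point) : - (x + x) = x.
Proof. by apply/eqP; rewrite eq_sym -subr_eq0 opprK addrA addrrr_point. Qed.

Lemma addrr_point (x : point) : x + x = - x.
Proof. by rewrite -[in RHS](opp_addrr_point x) opprK. Qed.

Definition vec (w : seq nat) : point := \row_(k < 4) (nth 0 w k)%:R.
Definition coords (u : point) : seq nat := mkseq (fun k => val (u 0 (inord k))) 4.

Lemma coords_words u : coords u \in words 4.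
Proof.
rewrite mem_words size_mkseq eqxx; apply/allP => x /mapP[k _ ->].
exact: ltn_ord.
Qed.

Lemma coordsK : cancel coords vec.
Proof.
move=> u; apply/rowP => k; rewrite mxE nth_mkseq // inord_val.
exact: natr_Zp.
Qed.

Lemma vec_wadd d e : vec (wadd d e) = vec d + vec e.
Proof.
by apply/rowP => k; rewrite !mxE nth_mkseq // (Fp_nat_mod (isT : prime 3)) natrD.
Qed.

Lemma vec_wopp d : vec (wopp d) = - vec d.
Proof. by rewrite vec_wadd -[vec d in RHS]opp_addrr_point opprK. Qed.

Lemma vec_inj : {in words 4 &, injective vec}.
Proof.
move=> d e; rewrite !mem_words => /andP[/eqP d4 d3] /andP[/eqP e4 e3] de.
apply: (eq_from_nth (x0 := 0)) => [|k]; first by rewrite d4 e4.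
rewrite d4 => k4; have := congr1 (fun u : point => val (u 0 (Ordinal k4))) de.
rewrite !mxE /= !(val_Fp_nat (isT : prime 3)) !modn_small //.
  by apply: (allP e3); rewrite mem_nth ?e4.
by apply: (allP d3); rewrite mem_nth ?d4.
Qed.

Definition rep i := vec (nth [::] proj_points i).

Lemma vec_nil : vec [::] = 0.
Proof. by apply/rowP => k; rewrite !mxE nth_nil. Qed.

Lemma rep_out i : (40 <= i)%N -> rep i = 0.
Proof. by move=> i40; rewrite /rep nth_default ?size_proj_points // vec_nil. Qed.

Lemma rep_inj : {in [pred i | i < 40]%N &, injective rep}.
Proof.
move=> i j i40 j40 /vec_inj ij; apply/eqP; rewrite -(nth_uniq [::] _ _ uniq_proj_points) //.
by apply/eqP/ij; apply/proj_points_words/mem_nth.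
Qed.

Lemma rep_neq_opp {i j} : (i < 40)%N -> (j < 40)%N -> rep i != - rep j.
Proof.
move=> i40 j40; apply/eqP; rewrite -vec_wopp => /vec_inj eq_ij.
have j_proj : nth [::] proj_points j \in proj_points by rewrite mem_nth.
move: (allP wopp_proj_points _ j_proj); rewrite -eq_ij ?mem_nth //.
  by apply/proj_points_words/mem_nth.
exact: wadd_words.
Qed.

(* The zero word is the only one without a class: its [proj_index] is 40 and [rep 40 = 0]. *)
Lemma vec_proj_index d :
  d \in words 4 -> vec d = rep (proj_index d) \/ vec d = - rep (proj_index d).
Proof.
move=> dW; have /orP[d_proj | /eqP->] := allP normalize_proj_points d dW; last first.
  by left; rewrite rep_out //; apply/rowP => k; rewrite !mxE nth_nseq if_same.
rewrite /rep /proj_index nth_index // /normalize.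
by case: (normalized d); [left | right; rewrite vec_wopp opprK].
Qed.

Lemma rep_class (u : point) : u != 0 -> exists2 i, (i < 40)%N & u = rep i \/ u = - rep i.
Proof.
move=> u0; exists (proj_index (coords u)).
  rewrite ltnNge; apply: contra u0 => /rep_out r0.
  by have [|] := vec_proj_index _ (coords_words u); rewrite coordsK r0 ?oppr0 => ->.
by rewrite -{1 3}[u]coordsK; apply/vec_proj_index/coords_words.
Qed.

Lemma third_pointsE i j : (i < 40)%N -> (j < 40)%N ->
  third_points line_table i j =
    [:: proj_index (wadd (nth [::] proj_points i) (nth [::] proj_points j));
        proj_index (wadd (nth [::] proj_points i) (wopp (nth [::] proj_points j)))].
Proof.
by move=> i40 j40; rewrite /third_points (nth_map [::]) ?(nth_map [::]) ?size_proj_points.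
Qed.

Lemma rep_addE {i j} : (i < 40)%N -> (j < 40)%N -> exists k1 k2,
  [/\ third_points line_table i j = [:: k1; k2],
      rep i + rep j = rep k1 \/ rep i + rep j = - rep k1 &
      rep i - rep j = rep k2 \/ rep i - rep j = - rep k2].
Proof.
move=> i40 j40; rewrite third_pointsE //; do 2!eexists; split; first by [].
  by rewrite /rep -vec_wadd; apply/vec_proj_index/wadd_words.
by rewrite /rep -vec_wopp -vec_wadd; apply/vec_proj_index/wadd_words.
Qed.


Definition class_list (P : pred point) :=
  [seq rep i | i <- iota 0 40 & P (rep i)] ++ [seq - rep i | i <- iota 0 40 & P (- rep i)].

Lemma mem_class_list (P : pred point) u : ~~ P 0 -> (u \in class_list P) = P u.
Proof.
move=> nP0; apply/idP/idP => [|Pu].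
  by rewrite mem_cat => /orP[] /mapP[i]; rewrite mem_filter => /andP[Pi _] ->.
have u0 : u != 0 by apply: contraNneq nP0 => <-.
have [i i40 [ui|ui]] := rep_class _ u0; rewrite mem_cat; apply/orP; [left|right];
  by apply/mapP; exists i; rewrite // mem_filter -ui Pu mem_iota.
Qed.

Lemma uniq_class_list (P : pred point) : uniq (class_list P).
Proof.
have in40 i : i \in iota 0 40 -> (i < 40)%N by rewrite mem_iota.
rewrite cat_uniq !map_inj_in_uniq ?filter_uniq ?iota_uniq //.
- rewrite andbT; apply/hasPn => u /mapP[j]; rewrite mem_filter => /andP[_ /in40 j40] ->.
  apply/mapP => -[i]; rewrite mem_filter => /andP[_ /in40 i40] /eqP.
  by rewrite eq_sym (negbTE (rep_neq_opp i40 j40)).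
- move=> i j; rewrite !mem_filter => /andP[_ /in40 i40] /andP[_ /in40 j40].
  by move/oppr_inj; apply: rep_inj.
- move=> i j; rewrite !mem_filter => /andP[_ /in40 i40] /andP[_ /in40 j40].
  exact: rep_inj.
Qed.


Lemma card_by_classes (P : pred point) : ~~ P 0 ->
  #|[set u | P u]| = (\sum_(i <- iota 0 40) (P (rep i) + P (- rep i)))%N.
Proof.
move=> nP0; have -> : [set u | P u] = [set u in class_list P].
  by apply/setP => u; rewrite !inE mem_class_list.
rewrite card_set_uniq ?uniq_class_list // size_cat !size_map !size_filter.
by rewrite big_split !sum_nat_count.
Qed.

Lemma vec_eq0 d : d \in words 4 -> (vec d == 0) = (d == nseq 4 0).
Proof.
move=> dW; have zW : nseq 4 0 \in words 4 by [].
have -> : (0 : point) = vec (nseq 4 0) by apply/rowP => k; rewrite !mxE nth_nseq if_same.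
exact: (inj_in_eq vec_inj).
Qed.

Lemma is_line_vec d e f : d \in words 4 -> e \in words 4 -> f \in words 4 ->
  is_line (vec d) (vec e) (vec f) =
  [&& d != e, e != f, d != f & wadd (wadd d e) f == nseq 4 0].
Proof.
move=> dW eW fW; rewrite /is_line !(inj_in_eq vec_inj) //.
by rewrite -!vec_wadd vec_eq0 // wadd_words.
Qed.

(* The nonzero zeros of the elliptic quadric x0 x1 + x2^2 + x3^2: three of them summing to 0
   would span a line contained in the quadric. *)
Definition elliptic_cone : seq (seq nat) :=
  [seq w <- words 4 | (w != nseq 4 0) &&
     ((nth 0 w 0 * nth 0 w 1 + nth 0 w 2 ^ 2 + nth 0 w 3 ^ 2) %% 3 == 0)%N].

Lemma elliptic_cone_no_line :
  all (fun d => all (fun e => all (fun f =>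
    ~~ [&& d != e, e != f, d != f & wadd (wadd d e) f == nseq 4 0])
      elliptic_cone) elliptic_cone) elliptic_cone.
Proof. by vm_compute. Qed.

Lemma cap_elliptic_cone : cap [set x in map vec elliptic_cone].
Proof.
have coneW : {subset elliptic_cone <= words 4} by move=> d; rewrite mem_filter => /andP[].
apply/forall_inP => x; rewrite inE => /mapP[d dC ->].
apply/forall_inP => y; rewrite inE => /mapP[e eC ->].
apply/forall_inP => z; rewrite inE => /mapP[f fC ->]; rewrite is_line_vec ?coneW //.
by have /allP/(_ e eC)/allP/(_ f fC) := allP elliptic_cone_no_line d dC.
Qed.

Lemma card_elliptic_cone : #|[set x in map vec elliptic_cone]| = 20%N.
Proof.
rewrite card_set_uniq ?size_map //; rewrite map_inj_in_uniq //.
by apply: sub_in2 vec_inj => d; rewrite mem_filter => /andP[].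
Qed.

Definition third (p x : point) : point := - (p + x).

Lemma thirdK p : involutive (third p).
Proof. by move=> x; rewrite /third opprD opprK addKr. Qed.

Lemma third_add p u : third p (p + u) = p - u.
Proof. by rewrite /third addrA opprD opp_addrr_point. Qed.

Lemma third_translate p u v : third (p + u) (p + v) = p - (u + v).
Proof. by rewrite /third addrACA opprD opp_addrr_point. Qed.

Lemma third_eq p x : (third p x == x) = (x == p).
Proof. by rewrite /third eq_sym -subr_eq0 opprK addrCA addrr_point subr_eq0 eq_sym. Qed.

Lemma is_line_third p x : x != p -> is_line p x (third p x).
Proof.
move=> xp; apply/and4P; split; rewrite 1?eq_sym //.
- by rewrite third_eq.
- by rewrite (can2_eq (thirdK p) (thirdK p)) /third opp_addrr_point.
- by rewrite /third subrr.
Qed.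

Lemma is_line_thirdE {p x y : point} : is_line p x y -> y = third p x.
Proof. by case/and4P=> _ _ _; rewrite addrC addr_eq0 => /eqP. Qed.

Lemma cap_third (S : {set point}) x y :
  cap S -> x \in S -> y \in S -> x != y -> third x y \notin S.
Proof.
move=> /forall_inP capS xS yS xy; apply/negP => zS.
by have /forall_inP/(_ y yS)/forall_inP/(_ _ zS) := capS x xS; rewrite is_line_third // eq_sym.
Qed.

Lemma completed_pairs_third p (S : {set point}) : p \notin S ->
  completed_pairs p S = [set [set x; third p x] | x in [set x in S | third p x \in S]].
Proof.
move=> pS; apply/setP => P; rewrite /completed_pairs in_set; apply/existsP/imsetP.
  case=> x /andP[xS /existsP[y /andP[yS /and3P[_ /eqP -> /is_line_thirdE yE]]]].
  by exists x; rewrite ?inE -yE ?xS.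
case=> x; rewrite inE => /andP[xS tS] ->; exists x; rewrite xS /=.
apply/existsP; exists (third p x); rewrite tS eqxx /= is_line_third ?andbT.
  by rewrite eq_sym third_eq; apply: contraNneq pS => <-.
by apply: contraNneq pS => <-.
Qed.


Section AnchoredCap.

Variables (C : {set point}) (a : point).
Hypotheses (capC : cap C) (C_max : forall D, cap D -> (#|D| <= #|C|)%N).
Hypotheses (aC : a \notin C) (C_alines : C = \bigcup_(L in alines_in a C) L).

Lemma third_anchor_closed x : x \in C -> third a x \in C.
Proof.
move=> xC; have /bigcupP[L] : x \in \bigcup_(L in alines_in a C) L by rewrite -C_alines.
rewrite inE => /andP[/existsP[b /existsP[c /andP[/eqP -> line_abc]]] LC].
have cE := is_line_thirdE line_abc.
rewrite !inE => /orP[] /eqP ->; apply: (subsetP LC); rewrite !inE.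
  by rewrite -cE eqxx orbT.
by rewrite cE thirdK eqxx.
Qed.

Lemma mem_anchor_opp u : (a - u \in C) = (a + u \in C).
Proof. by apply/idP/idP => /third_anchor_closed; rewrite third_add ?opprK. Qed.

Definition onC i := a + rep i \in C.

Lemma onC_lt40 i : onC i -> (i < 40)%N.
Proof. by rewrite ltnNge; apply: contraTN => /rep_out; rewrite /onC => ->; rewrite addr0. Qed.

Lemma mem_anchor_class {u i} : u = rep i \/ u = - rep i -> (a + u \in C) = onC i.
Proof. by case=> ->; rewrite ?mem_anchor_opp. Qed.

Lemma proj_cap_onC : proj_cap line_table onC.
Proof.
move=> i j ij Ci Cj; have i40 := onC_lt40 _ Ci; have j40 := onC_lt40 _ Cj.
have [k1 [k2 [-> sum_ij diff_ij]]] := rep_addE i40 j40.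
rewrite /= orbF negb_or; apply/andP; split.
  rewrite -(mem_anchor_class sum_ij) -mem_anchor_opp -third_translate.
  apply: cap_third => //; rewrite (inj_eq (addrI a)).
  by apply: contra ij => /eqP/rep_inj ij; apply/eqP/ij.
rewrite -(mem_anchor_class diff_ij) -mem_anchor_opp -third_translate.
by apply: cap_third; rewrite // ?mem_anchor_opp // (inj_eq (addrI a)) rep_neq_opp.
Qed.

Lemma card_anchored_cap : #|C| = (2 * count onC (iota 0 40))%N.
Proof.
rewrite -(card_preimset _ (addrI a)).
rewrite (_ : _ @^-1: C = [set u | a + u \in C]); last by apply/setP => u; rewrite !inE.
rewrite card_by_classes ?addr0 //; under eq_bigr do rewrite mem_anchor_opp.
by rewrite -sum_nat_count big_distrr; apply: eq_bigr => i _; rewrite addnn -mul2n.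
Qed.

Lemma onC_ovoid : ovoid_counts line_table onC.
Proof.
apply: ovoid_line_table onC_lt40 proj_cap_onC _.
have := C_max _ cap_elliptic_cone.
by rewrite card_elliptic_cone card_anchored_cap -[20%N]/(2 * 10)%N leq_pmul2l.
Qed.

Lemma alines_in_third : alines_in a C = [set [set x; third a x] | x in C].
Proof.
apply/setP => L; apply/idP/imsetP.
  rewrite inE => /andP[/existsP[b /existsP[c /andP[/eqP -> line_abc]]] LC].
  exists b; last by rewrite (is_line_thirdE line_abc).
  by apply: (subsetP LC); rewrite !inE eqxx.
case=> x xC ->; rewrite inE; apply/andP; split.
  apply/existsP; exists x; apply/existsP; exists (third a x); rewrite eqxx is_line_third //.
  by apply: contraNneq aC => <-.
by apply/subsetP => y; rewrite !inE => /orP[]/eqP->; rewrite ?third_anchor_closed.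
Qed.

Lemma card_alines_in : #|alines_in a C| = 10%N.
Proof.
have third_neq : {in C, forall x, third a x != x}.
  by move=> x xC; rewrite third_eq; apply: contraNneq aC => <-.
have := card_involution_pairs third_anchor_closed (in1W (thirdK a)) third_neq.
rewrite -alines_in_third card_anchored_cap onC_ovoid.1 mulnC => /eqP.
by rewrite eqn_pmul2l // => /eqP.
Qed.

Lemma card_secant_points p :
  p \notin C -> p != a -> #|[set x in C | third p x \in C]| = 6%N.
Proof.
move=> pC pa; set w := p - a; have pE : p = a + w by rewrite /w addrC subrK.
have w0 : w != 0 by rewrite subr_eq0.
have [r r40 wE] := rep_class w w0.
have nCr : ~~ onC r by rewrite -(mem_anchor_class wE) -pE.
rewrite -(card_preimset _ (addrI a)).
pose P u := (a + u \in C) && (a + (w + u) \in C).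
rewrite (_ : _ @^-1: _ = [set u | P u]); last first.
  by apply/setP => u; rewrite !inE pE third_translate mem_anchor_opp.
rewrite card_by_classes; last by rewrite /P addr0 (negbTE aC).
have summandE i : i \in iota 0 40 ->
    (P (rep i) + P (- rep i)%R = onC i * count onC (third_points line_table r i))%N.
  rewrite mem_iota => /= i40; have [k1 [k2 [-> sum_ri diff_ri]]] := rep_addE r40 i40.
  have opp_sum : - rep r + rep i = - (rep r - rep i) by rewrite opprD opprK.
  rewrite /P mem_anchor_opp -/(onC i).
  case: wE => ->; last rewrite opp_sum -opprD !mem_anchor_opp addnC;
    by rewrite (mem_anchor_class sum_ri) (mem_anchor_class diff_ri); case: (onC i);
       rewrite /= ?mul1n ?addn0.
rewrite (eq_big_seq _ summandE) -[RHS](onC_ovoid.2 r r40 nCr) [RHS]big_mkcond.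
by apply: eq_bigr => i _; case: (onC i); rewrite /= ?mul1n.
Qed.

Lemma card_completed_pairs p : p \notin C -> p != a -> #|completed_pairs p C| = 3%N.
Proof.
move=> pC pa; set X := [set x in C | third p x \in C].
have thirdX : {in X, forall x, third p x \in X}.
  by move=> x; rewrite !inE thirdK => /andP[-> ->].
have third_neq : {in X, forall x, third p x != x}.
  by move=> x; rewrite !inE third_eq => /andP[xC _]; apply: contraNneq pC => <-.
have := card_involution_pairs thirdX (in1W (thirdK p)) third_neq.
rewrite -completed_pairs_third // card_secant_points // -[6%N]/(3 * 2)%N => /eqP.
by rewrite eqn_mul2r => /eqP.
Qed.

End AnchoredCap.

Local Close Scope ring_scope.

Theorem proposition3p1 (C : {set point}) (a : point) :
  maximal_cap C -> anchor a C ->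
  (#|alines_in a C| = 10 /\ C = \bigcup_(L in alines_in a C) L) /\
  (forall p : point, p \notin C -> p != a -> #|completed_pairs p C| = 3).
Proof.
move=> [capC C_max] [aC C_alines]; split; first split=> //.
  exact: card_alines_in capC C_max aC C_alines.
by move=> p pC pa; apply: card_completed_pairs capC C_max aC C_alines p pC pa.
Qed.
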